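(* Let $p$ be an odd prime. Let $N$ be a subgroup of $\mathrm{PGL}_2(\mathbb{F}_p)$ isomorphic to $C_2\times C_2$, so that there are three subgroups $C<N$ of index $2$. If $N\le\mathrm{PSL}_2(\mathbb{F}_p)$, then every such $C$ is contained in (the image of) a Cartan subgroup and $N$ in its normaliser, and each $C$ is split when $p\equiv1\pmod4$ and non-split when $p\equiv3\pmod4$. If $N\not\le\mathrm{PSL}_2(\mathbb{F}_p)$, then for $p\equiv1\pmod4$ one such subgroup $C$ is contained in a split Cartan subgroup while the other two are contained in non-split Cartan subgroups; while if $p\equiv3\pmod4$ then one $C$ is non-split and the other two are split.
   Context: A Cartan subgroup of $\mathrm{GL}_2(\mathbb{F}_p)$ is split (conjugate to the diagonal matrices) or non-split (conjugate to the image of $\mathbb{F}_{p^2}^*$ acting on $\mathbb{F}_{p^2}\cong\mathbb{F}_p^2$); Cartan subgroups of $\mathrm{PGL}_2(\mathbb{F}_p)$, their normalisers, and the terms split/non-split there refer to images of those in $\mathrm{GL}_2(\mathbb{F}_p)$. $\mathrm{PSL}_2(\mathbb{F}_p)$ is viewed as the index-$2$ subgroup of $\mathrm{PGL}_2(\mathbb{F}_p)$ of classes of matrices with square determinant. *)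

From HB Require Import structures.
From mathcomp Require Import all_boot all_order all_algebra all_fingroup all_solvable all_field.
Set Implicit Arguments. Unset Strict Implicit. Unset Printing Implicit Defensive.
Import GroupScope.

(* GL_2(F_p) is the finGroupType {'GL_2['F_p]} of invertible 2x2 matrices over 'F_p.
   Matrices act on row vectors on the right: v |-> v *m g. *)
Section PGL.
Variable p : nat.

Local Notation GL2 := {'GL_2['F_p]}.

Definition scalarGL : {set GL2} := [set g : GL2 | is_scalar_mx (GLval g)].

Definition PGL2 := coset_of scalarGL.

Definition projPGL (g : GL2) : PGL2 := coset scalarGL g.

Definition imPGL (A : {set GL2}) : {set PGL2} := projPGL @: A.

Definition PSL2 : {set PGL2} :=
  imPGL [set g : GL2 | [exists a : 'F_p, (\det (GLval g) == a ^+ 2)%R]].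

Definition diagGL : {set GL2} := [set g : GL2 | is_diag_mx (GLval g)].

Definition split_cartan (Ca : {set GL2}) : Prop :=
  exists h : GL2, Ca = diagGL :^ h.

(* Non-split Cartan subgroup of GL_2(F_p): the image of K^* acting by
   multiplication on K, for a field K with p^2 elements, transported to
   F_p^2 along some F_p-linear (= additive, since F_p is the prime field)
   bijection phi : K -> F_p^2.  Ranging over all phi gives all conjugates. *)
Definition nonsplit_cartan (Ca : {set GL2}) : Prop :=
  exists (K : finFieldType) (phi : K -> 'rV['F_p]_2),
    [/\ #|K| = (p ^ 2)%N,
        {morph phi : x y / (x + y)%R >-> (x + y)%R},
        bijective phi &
        Ca = [set g : GL2 | [exists x : K, (x != 0%R) &&
                [forall v : K, phi (x * v)%R == (phi v *m GLval g)%R]]]].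

Definition cartan (Ca : {set GL2}) : Prop := split_cartan Ca \/ nonsplit_cartan Ca.

End PGL.

(* An involution z of PGL_2(F_p) lifts to a trace-zero matrix g = [[a, b], [c, -a]],
   whose square is the scalar a^2 + bc = - det g.  The units of F_p[g] form a Cartan
   subgroup containing g and normalised by the lifts of the centraliser of z.  It is
   split when - det g is a square, since g then has the two eigenvalues
   +-sqrt(- det g), and non-split otherwise, F_p[g] being then a field with p^2
   elements.  As z lies in PSL_2(F_p) iff det g is a square, and -1 is a square iff
   p = 1 mod 4, the Cartan subgroup is split iff (p = 1 mod 4) agrees with
   (z in PSL_2(F_p)).
   Every index-2 subgroup of a Klein four-group N is generated by an involution.  When
   N is not contained in PSL_2(F_p), membership in PSL_2(F_p) is a non-trivial sign
   on N, whose kernel contains exactly one involution. *)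

From HB Require Import structures.
From mathcomp Require Import all_boot all_order all_algebra all_fingroup all_solvable all_field.
From mathcomp Require Import ring zify.
Set Implicit Arguments. Unset Strict Implicit. Unset Printing Implicit Defensive.
Import GroupScope GRing.Theory.

Definition is_square (F : finFieldType) (u : F) : bool := [exists y : F, u == (y ^+ 2)%R].

Section OddFiniteField.
Local Open Scope ring_scope.
Variable F : finFieldType.
Hypothesis oddF : odd #|F|.

Lemma odd_card_two_neq0 : 2%:R != 0 :> F.
Proof.
apply: contraTneq oddF => two0.
have o1 : #[1%R : F]%g = 2%N.
  apply/eqP; rewrite eqn_leq dvdn_leq ?order_dvdn ?order_gt1 //=.
    exact: oner_neq0.
  by rewrite FinRing.zmodXgE [_ *+ 2]two0.
by rewrite -cardsT -dvdn2 -o1 order_dvdG ?inE.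
Qed.

Lemma oner_neq_oppr1 : 1 != -1 :> F.
Proof. by rewrite -subr_eq0 opprK; exact: odd_card_two_neq0. Qed.

Lemma expf_card_pred (x : F) : x != 0 -> x ^+ #|F|.-1 = 1.
Proof.
move=> x_nz; apply: (mulfI x_nz); rewrite mulr1 -exprS prednK ?expf_card //.
exact: (ltnW (finNzRing_gt1 F)).
Qed.

Let m := (#|F|.-1)./2.

Lemma card_pred_half : #|F|.-1 = (m * 2)%N.
Proof. by rewrite muln2 halfK; case: #|F| oddF => //= n /negbTE->; rewrite subn0. Qed.

Lemma prim_root_card_pred : exists z : F, #|F|.-1.-primitive_root z.
Proof.
have /hasP[z _ ?] : has #|F|.-1.-primitive_root (enum [pred x : F | x != 0]).
  apply: has_prim_root.
  - by rewrite -subn1 subn_gt0 (finNzRing_gt1 F).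
  - by apply/allP => x; rewrite mem_enum unity_rootE => /expf_card_pred->.
  - exact: enum_uniq.
  - by rewrite -cardE -(cardC1 0).
by exists z.
Qed.

Lemma euler_criterion (u : F) : u != 0 -> is_square u = (u ^+ m == 1).
Proof.
move=> u_nz; apply/existsP/eqP => [[y /eqP uy] | um].
  have y_nz : y != 0 by apply: contraNneq u_nz => y0; rewrite uy y0 expr0n.
  by rewrite uy -exprM mulnC -card_pred_half expf_card_pred.
have [z zprim] := prim_root_card_pred.
have m_gt0 : (0 < m)%N.
  by rewrite -(ltn_pmul2r (isT : 0 < 2)%N) -card_pred_half -subn1 subn_gt0 (finNzRing_gt1 F).
move: um; have [[i /= _] ->] := prim_rootP zprim (expf_card_pred u_nz).
rewrite -exprM -(expr0 z) => /eqP; rewrite (eq_prim_root_expr zprim) card_pred_half.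
rewrite mod0n mulnC -muln_modr -(muln0 m) eqn_pmul2l // => /dvdnP[k ->].
by exists (z ^+ k); rewrite -exprM.
Qed.

Lemma expr_half_card_pred (u : F) : u != 0 -> (u ^+ m == 1) || (u ^+ m == -1).
Proof.
move=> u_nz; have := expf_card_pred u_nz; rewrite card_pred_half exprM => /eqP.
by rewrite -subr_eq0 subr_sqr_1 mulf_eq0 subr_eq0 addr_eq0.
Qed.

Lemma is_squareM (u v : F) : u != 0 -> v != 0 ->
  is_square (u * v) = (is_square u == is_square v).
Proof.
move=> u_nz v_nz; rewrite !euler_criterion ?mulf_neq0 // exprMn.
have N1_neq1 : (-1 == 1 :> F) = false by rewrite eq_sym (negbTE oner_neq_oppr1).
have := expr_half_card_pred u_nz; have := expr_half_card_pred v_nz.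
by do 2!case/orP => /eqP->; rewrite ?mulr1 ?mulrN1 ?opprK ?eqxx ?N1_neq1 ?(negbTE oner_neq_oppr1).
Qed.

Lemma is_square_oppr1 : is_square (-1 : F) = (#|F| %% 4 == 1)%N.
Proof.
rewrite euler_criterion ?oppr_eq0 ?oner_eq0 // -signr_odd /m.
have [k ->] : exists k, #|F| = (k * 2).+1.
  by exists m; rewrite -card_pred_half prednK ?(ltnW (finNzRing_gt1 F)).
rewrite /= muln2 doubleK -[k in RHS]odd_double_half.
case: (odd k); rewrite ?expr1 ?expr0 ?eqxx ?(eq_sym (-1)) ?(negbTE oner_neq_oppr1).
  by apply/esym/negbTE/eqP; lia.
by apply/esym/eqP; lia.
Qed.

End OddFiniteField.

Section Matrix2.
Local Open Scope ring_scope.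
Variable R : comNzRingType.

Definition mx2 (a b c d : R) : 'M[R]_2 :=
  \matrix_(i, j) if i == 0 then if j == 0 then a else b else if j == 0 then c else d.

Lemma ord2P (i : 'I_2) : i = 0 \/ i = 1.
Proof. by case: i => [[|[|//]] ?]; [left|right]; apply: val_inj. Qed.

Lemma mx2_eta (M : 'M[R]_2) : M = mx2 (M 0 0) (M 0 1) (M 1 0) (M 1 1).
Proof. by apply/matrixP => i j; rewrite !mxE; case: (ord2P i) => ->; case: (ord2P j) => ->. Qed.

Lemma mulmx_row2 (v : 'rV[R]_2) (M : 'M[R]_2) j :
  (v *m M) 0 j = v 0 0 * M 0 j + v 0 1 * M 1 j.
Proof.
by rewrite !mxE !big_ord_recl big_ord0 addr0 (_ : lift ord0 ord0 = 1 :> 'I_2) //; apply: val_inj.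
Qed.

Lemma mx2_inj a b c d a' b' c' d' : mx2 a b c d = mx2 a' b' c' d' ->
  [/\ a = a', b = b', c = c' & d = d'].
Proof.
by move=> /matrixP e; split; [have := e 0 0|have := e 0 1|have := e 1 0|have := e 1 1];
  rewrite !mxE.
Qed.

Lemma mx2_add a b c d a' b' c' d' :
  mx2 a b c d + mx2 a' b' c' d' = mx2 (a + a') (b + b') (c + c') (d + d').
Proof. by apply/matrixP => i j; rewrite !mxE; case: (ord2P i) => ->; case: (ord2P j) => ->. Qed.

Lemma mx2_scale k a b c d : k *: mx2 a b c d = mx2 (k * a) (k * b) (k * c) (k * d).
Proof. by apply/matrixP => i j; rewrite !mxE; case: (ord2P i) => ->; case: (ord2P j) => ->. Qed.

Lemma mx2_scalar k : k%:M = mx2 k 0 0 k.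
Proof. by apply/matrixP => i j; rewrite !mxE; case: (ord2P i) => ->; case: (ord2P j) => ->. Qed.

Lemma mx2_mul a b c d a' b' c' d' : mx2 a b c d *m mx2 a' b' c' d' =
  mx2 (a * a' + b * c') (a * b' + b * d') (c * a' + d * c') (c * b' + d * d').
Proof.
apply/matrixP => i j; rewrite !mxE !big_ord_recl big_ord0 !mxE /=.
by case: (ord2P i) => ->; case: (ord2P j) => -> /=; rewrite addr0.
Qed.

Lemma det_mx2 a b c d : \det (mx2 a b c d) = a * d - b * c.
Proof.
rewrite (expand_det_row _ 0) !big_ord_recl big_ord0 /cofactor !det_mx11 !mxE /=.
by rewrite addr0 expr0 expr1 mul1r mulN1r mulrN.
Qed.

Lemma mx2_is_scalar a b c d : is_scalar_mx (mx2 a b c d) = [&& b == 0, c == 0 & a == d].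
Proof.
apply/is_scalar_mxP/and3P => [[k] | [/eqP-> /eqP-> /eqP->]]; last by exists d; rewrite mx2_scalar.
by rewrite mx2_scalar => /mx2_inj[-> -> -> ->]; rewrite !eqxx.
Qed.

Lemma mx2_is_diag a b c d : is_diag_mx (mx2 a b c d) = (b == 0) && (c == 0).
Proof.
apply/is_diag_mxP/andP => [d_mx | [/eqP b0 /eqP c0] i j].
  by have := d_mx 0 1 isT; have := d_mx 1 0 isT; rewrite !mxE /= => -> ->; rewrite eqxx.
by rewrite !mxE; case: (ord2P i) => ->; case: (ord2P j) => ->.
Qed.

Lemma mx2_trace0_sqr a b c : mx2 a b c (- a) *m mx2 a b c (- a) = (a ^+ 2 + b * c)%:M.
Proof. by rewrite mx2_mul mx2_scalar; congr mx2; ring. Qed.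

End Matrix2.

Section Matrix2Domain.
Local Open Scope ring_scope.
Variable R : idomainType.

Lemma mx2_sqr_scalar_trace0 (a b c d : R) :
  is_scalar_mx (mx2 a b c d *m mx2 a b c d) -> ~~ is_scalar_mx (mx2 a b c d) -> d = - a.
Proof.
rewrite mx2_mul !mx2_is_scalar => /and3P[/eqP bad /eqP cad /eqP sq] not_scalar.
apply/eqP; rewrite -addr_eq0 addrC; apply: contraNT not_scalar => ad_nz.
have b0 : b = 0 by apply: (mulIf ad_nz); rewrite mul0r mulrDr mulrC bad.
have c0 : c = 0 by apply: (mulIf ad_nz); rewrite mul0r mulrDr (mulrC c d) cad.
have ad : (a - d) * (a + d) = 0.
  by move: sq; rewrite -subr_sqr !expr2 b0 mul0r mulr0 addr0 add0r => ->; rewrite subrr.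
by move: ad; rewrite b0 c0 !eqxx => /eqP; rewrite mulf_eq0 (negbTE ad_nz) orbF subr_eq0.
Qed.

End Matrix2Domain.

Section Diagonalization.
Local Open Scope ring_scope.
Variable F : fieldType.

Lemma conj_scalar_plus (H M D : 'M[F]_2) u v : H \in unitmx -> H *m M = D *m H ->
  H *m (u%:M + v *: M) *m invmx H = u%:M + v *: D.
Proof.
by move=> H_unit HM; rewrite mulmxDr mulmxDl -scalemxAr -scalemxAl HM mulmxK // scalar_mxC mulmxK.
Qed.

Lemma span_diagonalizable (H M X : 'M[F]_2) e1 e2 : H \in unitmx ->
  H *m M = mx2 e1 0 0 e2 *m H -> e1 != e2 ->
  (exists u v, X = u%:M + v *: M) <-> is_diag_mx (H *m X *m invmx H).
Proof.
move=> H_unit HM e12; split => [[u [v ->]] | /is_diag_mxP Y_diag].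
  rewrite (conj_scalar_plus _ _ H_unit HM) mx2_scalar mx2_scale mx2_add mx2_is_diag.
  by rewrite !mulr0 !addr0 eqxx.
set Y := H *m X *m invmx H in Y_diag *.
have e12' : e1 - e2 != 0 by rewrite subr_eq0.
exists (Y 0 0 - (Y 0 0 - Y 1 1) / (e1 - e2) * e1), ((Y 0 0 - Y 1 1) / (e1 - e2)).
apply: (can_inj (mulmxKV H_unit)); apply: (can_inj (mulKmx H_unit)).
have Y_mx2 : Y = mx2 (Y 0 0) 0 0 (Y 1 1) by rewrite {1}[Y]mx2_eta (Y_diag 0 1) ?(Y_diag 1 0).
rewrite !mulmxA -/Y {1}Y_mx2 (conj_scalar_plus _ _ H_unit HM) mx2_scalar mx2_scale mx2_add.
by congr mx2; field.
Qed.

Hypothesis two_neq0 : 2%:R != 0 :> F.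

Lemma trace0_diagonalizable (a b c be : F) : be != 0 -> a ^+ 2 + b * c = be ^+ 2 ->
  exists H e1 e2, [/\ H \in unitmx, H *m mx2 a b c (- a) = mx2 e1 0 0 e2 *m H & e1 != e2].
Proof.
have neq_opp (e : F) : e != 0 -> e != - e.
  by move=> e_nz; rewrite -subr_eq0 opprK -mulr2n -mulr_natr mulf_neq0.
move=> be_nz sq_be; have [c0|c_nz] := eqVneq c 0.
  have a_nz : a != 0.
    by apply: contraNneq be_nz => a0; rewrite -sqrf_eq0 -sq_be c0 a0 mulr0 addr0 expr0n.
  exists (mx2 (a + a) b 0 1), a, (- a); split; last exact: neq_opp.
    by rewrite unitmxE det_mx2 unitfE mulr1 mulr0 subr0 -mulr2n -mulr_natr mulf_neq0.
  by rewrite !mx2_mul c0; congr mx2; ring.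
exists (mx2 c (be - a) c (- be - a)), be, (- be); split; last exact: neq_opp.
  rewrite unitmxE det_mx2 unitfE.
  have -> : c * (- be - a) - (be - a) * c = - (be * c * 2%:R) by ring.
  by rewrite oppr_eq0 !mulf_neq0.
have -> : b = (be ^+ 2 - a ^+ 2) / c by rewrite -sq_be addrC addKr mulfK.
by rewrite !mx2_mul; congr mx2; field.
Qed.

End Diagonalization.

Section QuadraticExtension.
Local Open Scope ring_scope.
Variables (F L : fieldType) (iota : {rmorphism F -> L}) (a b c : F) (y : L).
Hypotheses (b_nz : b != 0) (y_sq : y ^+ 2 = iota (a ^+ 2 + b * c)).
Hypothesis y_notin : forall u, y != iota u.

Lemma iota_root_eq0 u t : (iota u + iota t * y == 0) = (u == 0) && (t == 0).
Proof.
apply/eqP/andP => [ut0 | [/eqP-> /eqP->]]; last by rewrite !rmorph0 mul0r addr0.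
have iu : iota u = - (iota t * y) by apply/eqP; rewrite -addr_eq0 ut0.
have t0 : t = 0.
  apply/eqP; apply: contraTT (y_notin (- u / t)) => t_nz; apply/negPn/eqP.
  by rewrite fmorph_div rmorphN iu opprK mulrAC divff ?mul1r ?fmorph_eq0.
by move: iu; rewrite t0 rmorph0 mul0r oppr0 => /eqP; rewrite fmorph_eq0 eqxx => ->.
Qed.

(* The F-linear map with e_0 |-> 1 that intertwines right multiplication by
   [[a, b], [c, -a]] with multiplication by y. *)
Definition root_coord (v : 'rV[F]_2) : L :=
  iota (v 0 0 - v 0 1 * a / b) + iota (v 0 1 / b) * y.

Lemma root_coordD : {morph root_coord : v w / v + w}.
Proof. by move=> v w; rewrite /root_coord !mxE !rmorphD; ring. Qed.

Lemma root_coordB v w : root_coord (v - w) = root_coord v - root_coord w.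
Proof. by rewrite /root_coord !mxE !rmorphB; ring. Qed.

Lemma root_coord_inj : injective root_coord.
Proof.
move=> v w vw; apply/eqP; rewrite -subr_eq0; apply/eqP.
have /eqP := subrr (root_coord v); rewrite {2}vw -root_coordB iota_root_eq0.
set d := v - w; case/andP=> /eqP d0 d1.
have d1_0 : d 0 1 = 0 by move: d1; rewrite mulf_eq0 invr_eq0 (negbTE b_nz) orbF => /eqP.
have d0_0 : d 0 0 = 0 by move: d0; rewrite d1_0 !mul0r subr0.
by apply/rowP => j; rewrite [RHS]mxE; case: (ord2P j) => ->.
Qed.

Lemma root_coord_mul v u t :
  root_coord (v *m (u%:M + t *: mx2 a b c (- a))) = (iota u + iota t * y) * root_coord v.
Proof.
have ic : iota c = (y ^+ 2 - iota a ^+ 2) / iota b.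
  by rewrite y_sq rmorphD rmorphXn addrC addKr rmorphM mulrC mulKf ?fmorph_eq0.
rewrite /root_coord !mulmx_row2 !mxE /= ?mulr1n ?mulr0n.
rewrite !(rmorphD, rmorphN, rmorphM, fmorph_div, rmorph0) ic.
by field; rewrite fmorph_eq0.
Qed.

End QuadraticExtension.

Lemma normsP_conj (gT : finGroupType) (A : {set gT}) (x : gT) :
  {in A, forall z, z ^ x \in A} -> x \in 'N(A).
Proof.
by move=> Ax; rewrite inE; apply/subsetP => y; rewrite mem_conjg => /Ax; rewrite conjgKV.
Qed.

Section CartanAlgebra.
Local Open Scope ring_scope.
Variable F : finFieldType.
Local Notation GL2 := {'GL_2[F]}.

Definition cartan_of (M : 'M[F]_2) : {set GL2} :=
  [set g : GL2 | [exists u, exists v, GLval g == u%:M + v *: M]].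

Lemma mem_cartan_of (M : 'M[F]_2) (g : GL2) :
  reflect (exists u v, GLval g = u%:M + v *: M) (g \in cartan_of M).
Proof.
rewrite inE; apply: (iffP existsP) => [[u /existsP[v /eqP]] | [u [v ->]]]; first by exists u, v.
by exists u; apply/existsP; exists v.
Qed.

Lemma cartan_of_group_set (M : 'M[F]_2) s : M *m M = s%:M -> group_set (cartan_of M).
Proof.
move=> sqrM; apply/group_setP; split.
  by apply/mem_cartan_of; exists 1, 0; rewrite GL_1E scale0r addr0.
move=> x y /mem_cartan_of[u1 [v1 ex]] /mem_cartan_of[u2 [v2 ey]]; apply/mem_cartan_of.
exists (u1 * u2 + v1 * v2 * s), (u1 * v2 + v1 * u2).
rewrite GL_MxE ex ey mulmxDl !mulmxDr !mul_scalar_mx mul_mx_scalar -scalemxAl -scalemxAr sqrM.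
rewrite !scalerA !scale_scalar_mx scalerDl raddfD /= (mulrC u2 v1).
by rewrite [_ *: M + _]addrC addrACA.
Qed.

Lemma mem_cartan_of_self (g : GL2) : g \in cartan_of (GLval g).
Proof. by apply/mem_cartan_of; exists 0, 1; rewrite scale1r raddf0 add0r. Qed.

Lemma cartan_of_norm (g k : GL2) (mu : F) : GLval (g ^ k)%g = mu *: GLval g ->
  k \in 'N(cartan_of (GLval g)).
Proof.
move=> gk; apply: normsP_conj => z /mem_cartan_of[u [v ez]]; apply/mem_cartan_of.
exists u, (v * mu); move: gk; rewrite !conjgE !GL_MxE GL_VxE ez => gk.
rewrite mulmxDl mulmxDr -scalemxAl -scalemxAr gk scalerA -scalar_mxC mulmxA.
by rewrite mulVmx ?GL_unitmx ?mul1mx.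
Qed.

End CartanAlgebra.

Lemma card_sign_kernel (gT : finGroupType) (G : {group gT}) (S : {set gT}) x :
  {in G &, forall u v, (u * v \in S) = ((u \in S) == (v \in S))} -> x \in G -> x \notin S ->
  #|G| = (#|G :&: S| * 2)%N.
Proof.
move=> SM xG xS.
(* Left multiplication by x swaps G :&: S and G :\: S. *)
have shift_x (A B : {set gT}) : {in A, forall z, x * z \in B} -> #|A| <= #|B|.
  move=> AB; rewrite -(card_imset _ (mulgI x)).
  by apply/subset_leq_card/subsetP => _ /imsetP[z zA ->]; apply: AB.
have le_ID : #|G :&: S| <= #|G :\: S|.
  by apply: shift_x => z /setIP[zG zS]; rewrite !inE groupM // SM // (negbTE xS) zS.
have le_DI : #|G :\: S| <= #|G :&: S|.
  by apply: shift_x => z /setDP[zG /negbTE zS]; rewrite !inE groupM // SM // (negbTE xS) zS.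
by rewrite -(cardsID S G); apply/eqP; rewrite muln2 -addnn eqn_add2l eqn_leq le_ID le_DI.
Qed.

Section KleinFourGroup.
Variables (gT : finGroupType) (N : {group gT}).
Hypothesis N_klein : N \isog [set: 'Z_2 * 'Z_2].

Lemma card_klein : #|N| = 4.
Proof. by rewrite (card_isog N_klein) cardsT card_prod card_ord. Qed.

Lemma klein_abelian : abelian N.
Proof.
rewrite (isog_abelian N_klein); apply/centsP => -[a b] _ [c d] _.
by change ((a * c, b * d) = (c * a, d * b)); congr (_, _); apply: Zp_mulgC.
Qed.

Lemma klein_expg2 x : x \in N -> x ^+ 2 = 1.
Proof.
move: x; apply/exponentP; rewrite (exponent_isog N_klein).
by apply/exponentP => -[[[|[|//]] ?] [[|[|//]] ?]] _; apply/eqP.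
Qed.

Lemma klein_order z : z \in N^# -> #[z] = 2.
Proof.
case/setD1P => z1 zN; apply/eqP; rewrite eqn_leq dvdn_leq ?order_dvdn ?klein_expg2 //.
by rewrite order_gt1.
Qed.

Lemma klein_index_cycle z : z \in N^# -> #|N : <[z]>| = 2.
Proof.
move=> zN; have zsubN : <[z]> \subset N by rewrite cycle_subG (setD1P zN).2.
have := Lagrange zsubN; rewrite card_klein -orderE klein_order // -[4]/(2 * 2)%N.
by move/eqP; rewrite eqn_pmul2l // => /eqP.
Qed.

Lemma klein_index2 (C : {group gT}) : C \subset N -> #|N : C| = 2 ->
  exists2 z, z \in N^# & C :=: <[z]>.
Proof.
move=> CN iC; have cardC : #|C| = 2.
  have := Lagrange CN; rewrite iC card_klein -[4]/(2 * 2)%N.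
  by move/eqP; rewrite eqn_pmul2r // => /eqP.
have /trivgPn[z zC z1] : C :!=: 1 by rewrite -cardG_gt1 cardC.
have zN : z \in N^# by rewrite !inE z1 (subsetP CN).
exists z => //; apply/eqP; rewrite eq_sym eqEcard cycle_subG zC /=.
by rewrite cardC -orderE klein_order.
Qed.

Lemma klein_sign_kernel (S : {set gT}) :
  {in N &, forall u v, (u * v \in S) = ((u \in S) == (v \in S))} -> ~~ (N \subset S) ->
  exists w, [/\ w \in N^#, w \in S & {in N^#, forall z, z \in S -> z = w}].
Proof.
move=> SM /subsetPn[x xN xS]; set K := N :&: S.
have K1 : 1 \in K by rewrite inE group1 -[1]mulg1 SM ?group1 ?eqxx.
have /cards1P[w Kw] : #|K :\ 1| == 1%N.
  have := card_sign_kernel SM xN xS; rewrite card_klein -/K (cardsD1 1 K) K1.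
  by move=> /= h; rewrite -(eqn_add2l 1) -(eqn_pmul2r (isT : 0 < 2)) -h.
have /setD1P[w1 /setIP[wN wS]] : w \in K :\ 1 by rewrite Kw set11.
exists w; split; rewrite ?inE ?w1 //.
by move=> z /setD1P[z1 zN] zS; apply/set1P; rewrite -Kw !inE z1 zN.
Qed.

End KleinFourGroup.

Section ProjectiveGroup.
Variable p : nat.
Local Notation GL2 := {'GL_2['F_p]}.

Lemma scalarGL_group_set : group_set (scalarGL p).
Proof.
apply/group_setP; split; first by rewrite inE GL_1E scalar_mx_is_scalar.
move=> x y; rewrite !inE GL_MxE => /is_scalar_mxP[a ->] /is_scalar_mxP[b ->].
by rewrite mul_scalar_mx scale_scalar_mx scalar_mx_is_scalar.
Qed.

Canonical scalarGL_group := group scalarGL_group_set.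

Lemma norm_scalarGL (g : GL2) : g \in 'N(scalarGL p).
Proof.
apply: normsP_conj => z; rewrite inE => /is_scalar_mxP[a za].
rewrite inE conjgE !GL_MxE GL_VxE za -scalar_mxC mulmxA mulVmx ?GL_unitmx //.
by rewrite mul1mx scalar_mx_is_scalar.
Qed.

Lemma projPGLM (g h : GL2) : projPGL (g * h) = projPGL g * projPGL h.
Proof. by rewrite /projPGL morphM ?norm_scalarGL. Qed.

Lemma projPGLJ (g k : GL2) : projPGL (g ^ k) = projPGL g ^ projPGL k.
Proof. by rewrite /projPGL morphJ ?norm_scalarGL. Qed.

Lemma projPGL_eq1 (g : GL2) : (projPGL g == 1) = (g \in scalarGL p).
Proof. by apply/eqP/idP => [|/coset_id //]; apply: coset_idr; apply: norm_scalarGL. Qed.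

Lemma projPGL_surj (x : PGL2 p) : exists g, x = projPGL g.
Proof. by have [g _ ->] := cosetP x; exists g. Qed.

Lemma imPGL_morphim (A : {set GL2}) : imPGL A = coset (scalarGL p) @* A.
Proof. by rewrite /imPGL morphimEsub //; apply/subsetP => g _; apply: norm_scalarGL. Qed.

Lemma eq_projPGL (g h : GL2) : projPGL g = projPGL h ->
  exists k : 'F_p, GLval g = (k *: GLval h)%R.
Proof.
case/kercoset_rcoset; rewrite ?norm_scalarGL // => s.
rewrite inE => /is_scalar_mxP[k sk] ->; exists k.
by rewrite GL_MxE sk mul_scalar_mx.
Qed.

End ProjectiveGroup.

Section SpecialProjectiveGroup.
Variables (p : nat) (p_pr : prime p) (p_odd : odd p).
Local Notation GL2 := {'GL_2['F_p]}.

Lemma odd_card_Fp : odd #|'F_p|.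
Proof. by rewrite card_Fp. Qed.

Lemma mem_PSL2 (g : GL2) : (projPGL g \in PSL2 p) = is_square (\det (GLval g))%R.
Proof.
apply/imsetP/idP => [[h] | g_sq]; last by exists g; rewrite ?inE.
rewrite inE => /existsP[a /eqP deth] /eq_projPGL[k ->].
by apply/existsP; exists (k * a)%R; rewrite detZ deth exprMn.
Qed.

Lemma PSL2M (u v : PGL2 p) : (u * v \in PSL2 p) = ((u \in PSL2 p) == (v \in PSL2 p)).
Proof.
have [[g ->] [h ->]] := (projPGL_surj u, projPGL_surj v).
by rewrite -projPGLM !mem_PSL2 GL_MxE det_mulmx is_squareM ?GL_det ?odd_card_Fp.
Qed.

End SpecialProjectiveGroup.

Section SplitCartan.
Local Open Scope ring_scope.
Variables (p : nat) (p_pr : prime p) (p_odd : odd p).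
Local Notation GL2 := {'GL_2['F_p]}.

Lemma split_cartan_of (a b c be : 'F_p) : be != 0 -> a ^+ 2 + b * c = be ^+ 2 ->
  split_cartan (cartan_of (mx2 a b c (- a))).
Proof.
move=> be_nz sq_be.
have two_nz := odd_card_two_neq0 (odd_card_Fp p_pr p_odd).
have [H [e1 [e2 [H_unit HM e12]]]] := trace0_diagonalizable two_nz be_nz sq_be.
pose h : GL2 := Sub H H_unit; exists h; apply/setP => x.
rewrite mem_conjg [RHS]inE conjgE (invgK h) !GL_MxE GL_VxE mulmxA.
by apply/mem_cartan_of/idP => /(span_diagonalizable (GLval x) H_unit HM e12).
Qed.

End SplitCartan.

Section NonsplitCartan.
Local Open Scope ring_scope.
Variables (p : nat) (p_pr : prime p) (p_odd : odd p).

Let Fp2_spec := pPrimePowerField p_pr (isT : (0 < 2)%N).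
Definition Fp2 : finFieldType := pPrimeCharType (s2valP Fp2_spec).

Lemma card_Fp2 : #|Fp2| = (p ^ 2)%N.
Proof. exact: s2valP' Fp2_spec. Qed.

Lemma sqrt_in_Fp2 (s : 'F_p) : exists y : Fp2, y ^+ 2 = in_alg Fp2 s.
Proof.
have [-> | s_nz] := eqVneq s 0; first by exists 0; rewrite rmorph0 expr0n.
have odd_Fp2 : odd #|Fp2| by rewrite card_Fp2 oddX p_odd orbT.
have /existsP[y /eqP->] : is_square (in_alg Fp2 s).
  rewrite euler_criterion ?fmorph_eq0 // card_Fp2.
  have -> : ((p ^ 2).-1./2 = p.-1 * p.+1./2)%N.
    have [k ->] : exists k, p = k.*2.+1 by exists p./2; rewrite -[p in LHS]odd_double_half p_odd.
    rewrite -!divn2 -!muln2; nia.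
  have s_p1 : s ^+ p.-1 = 1 by rewrite -[in p.-1](card_Fp p_pr) expf_card_pred.
  by rewrite exprM -rmorphXn s_p1 rmorph1 expr1n.
by exists y.
Qed.

Lemma nonsplit_cartan_of (a b c : 'F_p) :
  ~~ is_square (a ^+ 2 + b * c) -> nonsplit_cartan (cartan_of (mx2 a b c (- a))).
Proof.
move=> s_nsq; set M := mx2 a b c (- a).
have b_nz : b != 0.
  by apply: contraNneq s_nsq => b0; apply/existsP; exists a; rewrite b0 mul0r addr0.
have [y y_sq] := sqrt_in_Fp2 (a ^+ 2 + b * c).
have y_notin u : y != in_alg Fp2 u.
  apply: contraNneq s_nsq => yu; apply/existsP; exists u.
  rewrite -(inj_eq (fmorph_inj (in_alg Fp2))) rmorphXn; apply/eqP.
  by rewrite -[RHS]/((in_alg Fp2 u) ^+ 2) -yu y_sq.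
pose rc := root_coord (in_alg Fp2) a b y.
have rc_inj : injective rc := root_coord_inj b_nz y_notin.
have rc_mul v u t : rc (v *m (u%:M + t *: M)) = (in_alg Fp2 u + in_alg Fp2 t * y) * rc v.
  exact: root_coord_mul b_nz y_sq v u t.
have rcD : {morph rc : v w / v + w} := root_coordD _ _ _ _.
have [phi rcK phiK] : bijective rc.
  by apply: inj_card_bij rc_inj _; rewrite card_Fp2 card_mx card_Fp.
exists Fp2, phi; split; first exact: card_Fp2.
- by move=> v w; apply: rc_inj; rewrite rcD !phiK.
- by exists rc.
apply/setP => g; rewrite [RHS]inE.
apply/mem_cartan_of/existsP => [[u [t eg]] | [x /andP[_ /forallP gx]]].
  exists (in_alg Fp2 u + in_alg Fp2 t * y); rewrite (iota_root_eq0 y_notin); apply/andP; split.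
    apply: contraNN (GL_det g) => /andP[/eqP u0 /eqP t0].
    by rewrite eg u0 t0 scale0r raddf0 addr0 det0.
  by apply/forallP => w; apply/eqP/rc_inj; rewrite phiK eg rc_mul phiK.
set r := phi x; exists (r 0 0 - r 0 1 * a / b), (r 0 1 / b).
apply/row_matrixP => i; rewrite !rowE; have /eqP := gx (rc (delta_mx 0 i)); rewrite rcK => <-.
by apply: rc_inj; rewrite phiK rc_mul -[x]phiK.
Qed.

End NonsplitCartan.

Section Involutions.
Variables (p : nat) (p_pr : prime p) (p_odd : odd p).
Local Notation GL2 := {'GL_2['F_p]}.

Lemma lift_involution (z : PGL2 p) : z ^+ 2 = 1 -> z != 1 ->
  exists g : GL2, exists a b c, z = projPGL g /\ GLval g = mx2 a b c (- a)%R.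
Proof.
have [g ->] := projPGL_surj z; rewrite expgS expg1 -projPGLM => /eqP g2 g1.
move: g1 g2; rewrite !projPGL_eq1 !inE GL_MxE [GLval g]mx2_eta => not_scalar sqr_scalar.
exists g, (GLval g 0 0)%R, (GLval g 0 1)%R, (GLval g 1 0)%R; split => //.
by rewrite [LHS]mx2_eta (mx2_sqr_scalar_trace0 sqr_scalar not_scalar).
Qed.

Definition cartan_type (is_split : bool) (Ca : {set GL2}) : Prop :=
  if is_split then split_cartan Ca else nonsplit_cartan Ca.

Lemma involution_cartan (z : PGL2 p) : z ^+ 2 = 1 -> z != 1 ->
  exists Ca : {group GL2},
    [/\ <[z]> \subset imPGL Ca, 'C[z] \subset imPGL 'N(Ca)
      & cartan_type ((p %% 4 == 1)%N == (z \in PSL2 p)) Ca].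
Proof.
move=> z2 z1; have [g [a [b [c [zg ga]]]]] := lift_involution z2 z1.
exists (Group (cartan_of_group_set (mx2_trace0_sqr a b c))); split.
- by rewrite imPGL_morphim cycle_subG zg mem_morphim ?norm_scalarGL //= -ga mem_cartan_of_self.
- apply/subsetP => u; have [k ->] := projPGL_surj u; rewrite zg => /cent1P gk.
  rewrite imset_f //; have [mu kg] : exists mu, GLval (g ^ k) = (mu *: GLval g)%R.
    by apply: eq_projPGL; rewrite projPGLJ conjgE -gk (mulKg (projPGL k)).
  by rewrite /= -ga (cartan_of_norm kg).
have det_g : (- \det (GLval g) = a ^+ 2 + b * c)%R by rewrite ga det_mx2; ring.
have oddFp := odd_card_Fp p_pr p_odd.
have -> : ((p %% 4 == 1)%N == (z \in PSL2 p)) = is_square (a ^+ 2 + b * c)%R.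
  rewrite zg mem_PSL2 -det_g -mulN1r is_squareM ?oppr_eq0 ?oner_eq0 ?GL_det //.
  by rewrite (is_square_oppr1 oddFp) card_Fp.
rewrite /cartan_type /=; case: ifPn => [/existsP[be /eqP sq_be] | ]; last first.
  exact: nonsplit_cartan_of.
apply: (split_cartan_of p_pr p_odd _ sq_be); apply: contraNneq (GL_det g) => be0.
by rewrite -oppr_eq0 det_g sq_be be0 expr0n.
Qed.

End Involutions.

Section KleinSubgroupsOfPGL2.
Variables (p : nat) (p_pr : prime p) (p_odd : odd p).
Variable N : {group PGL2 p}.
Hypothesis N_klein : N \isog [set: 'Z_2 * 'Z_2].
Local Notation GL2 := {'GL_2['F_p]}.

Lemma klein_involution_cartan z : z \in N^# ->
  exists Ca : {group GL2}, [/\ <[z]> \subset imPGL Ca, N \subset imPGL 'N(Ca)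
    & cartan_type ((p %% 4 == 1)%N == (z \in PSL2 p)) Ca].
Proof.
case/setD1P => z1 zN.
have [Ca [zCa cent_z type]] := involution_cartan p_pr p_odd (klein_expg2 N_klein zN) z1.
exists Ca; split => //; apply: subset_trans cent_z.
by rewrite sub_cent1 (subsetP (klein_abelian N_klein)).
Qed.

Lemma klein_in_PSL2_cartan : N \subset PSL2 p ->
  forall C : {group PGL2 p}, C \subset N -> #|N : C| = 2 ->
  exists Ca : {group GL2},
    [/\ cartan_type (p %% 4 == 1)%N Ca, C \subset imPGL Ca & N \subset imPGL 'N(Ca)].
Proof.
move=> N_PSL C CN iC; have [z zN ->] := klein_index2 N_klein CN iC.
have [Ca [zCa NCa]] := klein_involution_cartan zN.
by rewrite (subsetP N_PSL z (setD1P zN).2) eqb_id; exists Ca.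
Qed.

Lemma klein_notin_PSL2_cartan : ~~ (N \subset PSL2 p) ->
  exists C0 : {group PGL2 p},
    [/\ C0 \subset N, #|N : C0| = 2,
        exists Ca : {group GL2}, cartan_type (p %% 4 == 1)%N Ca /\ C0 \subset imPGL Ca
      & forall C : {group PGL2 p}, C \subset N -> #|N : C| = 2 -> C != C0 ->
          exists Ca : {group GL2}, cartan_type (p %% 4 != 1)%N Ca /\ C \subset imPGL Ca].
Proof.
move=> N_PSL; have PSL2M_N : {in N &, forall u v, _} := fun u v _ _ => PSL2M p_pr p_odd u v.
have [w [wN wPSL PSL_w]] := klein_sign_kernel N_klein PSL2M_N N_PSL.
exists <[w]>%G; split; first by rewrite cycle_subG (setD1P wN).2.
- exact: klein_index_cycle.
- have [Ca [wCa _]] := klein_involution_cartan wN.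
  by rewrite wPSL eqb_id; exists Ca.
move=> C CN iC Cw; have [z zN Cz] := klein_index2 N_klein CN iC.
have [Ca [zCa _]] := klein_involution_cartan zN.
have /negbTE zPSL : z \notin PSL2 p.
  by apply: contra Cw => /(PSL_w z zN) zw; apply/eqP/val_inj; rewrite /= Cz zw.
by rewrite Cz zPSL eqbF_neg; exists Ca.
Qed.

End KleinSubgroupsOfPGL2.

Theorem lemma2p7 (p : nat) (Hp : prime p) (Hodd : odd p)
    (N : {group PGL2 p}) (HN : N \isog [set: 'Z_2 * 'Z_2]) :
  (* Case N <= PSL_2(F_p) *)
  (N \subset PSL2 p ->
   forall C : {group PGL2 p}, C \subset N -> #|N : C| = 2%N ->
     exists Ca : {group {'GL_2['F_p]}},
       [/\ cartan Ca, C \subset imPGL Ca, N \subset imPGL 'N(Ca),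
           (p %% 4 = 1)%N -> split_cartan Ca &
           (p %% 4 = 3)%N -> nonsplit_cartan Ca])
  /\
  (* Case N not <= PSL_2(F_p) *)
  (~~ (N \subset PSL2 p) ->
   ((p %% 4 = 1)%N ->
     exists C0 : {group PGL2 p},
       [/\ C0 \subset N, #|N : C0| = 2%N,
           (exists Ca : {group {'GL_2['F_p]}}, split_cartan Ca /\ C0 \subset imPGL Ca) &
           forall C : {group PGL2 p}, C \subset N -> #|N : C| = 2%N -> C != C0 ->
             exists Ca : {group {'GL_2['F_p]}}, nonsplit_cartan Ca /\ C \subset imPGL Ca])
   /\
   ((p %% 4 = 3)%N ->
     exists C0 : {group PGL2 p},
       [/\ C0 \subset N, #|N : C0| = 2%N,
           (exists Ca : {group {'GL_2['F_p]}}, nonsplit_cartan Ca /\ C0 \subset imPGL Ca) &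
           forall C : {group PGL2 p}, C \subset N -> #|N : C| = 2%N -> C != C0 ->
             exists Ca : {group {'GL_2['F_p]}}, split_cartan Ca /\ C \subset imPGL Ca])).
Proof.
split => [N_PSL C CN iC | N_PSL].
  have [Ca [type CCa NCa]] := klein_in_PSL2_cartan Hp Hodd HN N_PSL CN iC.
  exists Ca; split=> //; try by move=> p_mod4; move: type; rewrite p_mod4.
  by move: type; rewrite /cartan_type; case: ifP => _; [left | right].
have [C0 [C0N iC0 [Ca0 [type0 C0Ca0]] others]] := klein_notin_PSL2_cartan Hp Hodd HN N_PSL.
split=> p_mod4; exists C0; split=> //; try by exists Ca0; move: type0; rewrite p_mod4.
all: move=> C CN iC CC0; have [Ca [type CCa]] := others C CN iC CC0.
all: by exists Ca; move: type; rewrite p_mod4.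
Qed.
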